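(* If $M\in\mathcal{D}_2$, then the set $P$ of all isolated points of $M$ is discrete.
   Context: A function on an open convex set $C\subset\mathbb{R}^d$ is DC if it is the difference of two convex functions on $C$. $\mathcal{D}_2$ denotes the family consisting of $\varnothing$ together with all nonempty closed sets $A\subset\mathbb{R}^2$ whose distance function $d_A=\operatorname{dist}(\cdot,A)$ is DC on $\mathbb{R}^2$. A set $D\subset\mathbb{R}^2$ is discrete if each point of $\mathbb{R}^2$ has a neighbourhood containing at most one point of $D$. *)

From Stdlib Require Import Reals.
From Coquelicot Require Import Coquelicot.
Open Scope R_scope.

Definition pt := (R * R)%type.
Definition edist (x y : pt) : R :=
  sqrt ((fst x - fst y) ^ 2 + (snd x - snd y) ^ 2).

Definition convex2 (g : pt -> R) : Prop :=
  forall (x y : pt) (t : R), 0 <= t <= 1 ->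
    g (t * fst x + (1 - t) * fst y, t * snd x + (1 - t) * snd y)
      <= t * g x + (1 - t) * g y.

Definition DC2 (f : pt -> R) : Prop :=
  exists g h : pt -> R, convex2 g /\ convex2 h /\ forall x, f x = g x - h x.

Definition closed2 (A : pt -> Prop) : Prop :=
  forall x : pt, (forall eps, 0 < eps -> exists a, A a /\ edist x a < eps) -> A x.

(* Distance function d_A(x) = inf { |x - a| : a in A } (finite for nonempty A). *)
Definition dist_set (A : pt -> Prop) (x : pt) : R :=
  real (Glb_Rbar (fun r => exists a, A a /\ r = edist x a)).

Definition D2 (A : pt -> Prop) : Prop :=
  (forall x, ~ A x) \/
  ((exists a, A a) /\ closed2 A /\ DC2 (dist_set A)).

Definition isolated_points (M : pt -> Prop) : pt -> Prop :=
  fun x => M x /\ exists eps, 0 < eps /\ forall y, M y -> edist y x < eps -> y = x.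

Definition discrete2 (D : pt -> Prop) : Prop :=
  forall p : pt, exists eps, 0 < eps /\
    forall y z, D y -> D z -> edist y p < eps -> edist z p < eps -> y = z.

(* Write d_M = g - h with g, h convex.  Near an isolated point q of M, d_M(y) = |y - q|,
   and d_M(q) = 0; adding a subgradient c of h at q gives
   g(y) >= g(q) + <c, y - q> + |y - q| for y near q, and convexity of g makes this hold
   for all y.  Adding these inequalities for two isolated points q, q' yields
   <c' - c, q' - q> >= 2 |q' - q|, so distinct isolated points get slopes in distinct
   unit cells of Z^2.  Near any point p the convex function g is bounded, so these slopes
   lie in a bounded box: only finitely many cells, hence finitely many isolated points
   near p, are available. *)

From Stdlib Require Import Reals Rgeom Lra Lia List Classical.
From Coquelicot Require Import Rcomplements Rbar Lub.
Open Scope R_scope.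

Lemma edist_dist_euc (x y : pt) :
  edist x y = dist_euc (fst x) (snd x) (fst y) (snd y).
Proof. unfold edist, dist_euc, Rsqr. f_equal. ring. Qed.

Lemma edist_sym (x y : pt) : edist x y = edist y x.
Proof. rewrite !edist_dist_euc. apply distance_symm. Qed.

Lemma edist_refl (x : pt) : edist x x = 0.
Proof. rewrite edist_dist_euc. apply distance_refl. Qed.

Lemma edist_triangle (x y z : pt) : edist x z <= edist x y + edist y z.
Proof. rewrite !edist_dist_euc. apply triangle. Qed.

Lemma edist_nonneg (x y : pt) : 0 <= edist x y.
Proof. apply sqrt_pos. Qed.

Lemma edist_pos (x y : pt) : x <> y -> 0 < edist x y.
Proof.
  intros Hxy. rewrite edist_dist_euc. apply sqrt_lt_R0.
  destruct (Req_dec (fst x) (fst y)) as [E1 | N1].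
  - assert (N2 : snd x - snd y <> 0).
    { intros E2. apply Hxy, injective_projections; lra. }
    pose proof (Rlt_0_sqr _ N2). pose proof (Rle_0_sqr (fst x - fst y)). lra.
  - assert (N1' : fst x - fst y <> 0) by lra.
    pose proof (Rlt_0_sqr _ N1'). pose proof (Rle_0_sqr (snd x - snd y)). lra.
Qed.

Lemma edist_fst (x y : pt) : Rabs (fst x - fst y) <= edist x y.
Proof.
  rewrite <- sqrt_Rsqr_abs. apply sqrt_le_1_alt. unfold Rsqr.
  pose proof (pow2_ge_0 (snd x - snd y)). nra.
Qed.

Lemma edist_snd (x y : pt) : Rabs (snd x - snd y) <= edist x y.
Proof.
  rewrite <- sqrt_Rsqr_abs. apply sqrt_le_1_alt. unfold Rsqr.
  pose proof (pow2_ge_0 (fst x - fst y)). nra.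
Qed.

Definition comb (t : R) (x y : pt) : pt :=
  (t * fst x + (1 - t) * fst y, t * snd x + (1 - t) * snd y).

Lemma edist_comb (t : R) (y q : pt) : 0 <= t -> edist (comb t y q) q = t * edist y q.
Proof.
  intros Ht. unfold edist, comb; cbn [fst snd].
  replace ((t * fst y + (1 - t) * fst q - fst q) ^ 2 + (t * snd y + (1 - t) * snd q - snd q) ^ 2)
    with (t ^ 2 * ((fst y - fst q) ^ 2 + (snd y - snd q) ^ 2)) by ring.
  rewrite sqrt_mult, sqrt_pow2; try nra.
  apply Rplus_le_le_0_compat; apply pow2_ge_0.
Qed.

Lemma convex2_comb (g : pt -> R) (x y : pt) (t : R) :
  convex2 g -> 0 <= t <= 1 -> g (comb t x y) <= t * g x + (1 - t) * g y.
Proof. intros Hg Ht. exact (Hg x y t Ht). Qed.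

Lemma convex2_le_Rmax (g : pt -> R) (x y : pt) (t : R) :
  convex2 g -> 0 <= t <= 1 -> g (comb t x y) <= Rmax (g x) (g y).
Proof.
  intros Hg Ht. pose proof (convex2_comb g x y t Hg Ht).
  pose proof (Rmax_l (g x) (g y)). pose proof (Rmax_r (g x) (g y)). nra.
Qed.

Lemma interval_comb (a b z : R) : a <= z <= b -> exists t, 0 <= t <= 1 /\ z = t * a + (1 - t) * b.
Proof.
  intros Hz. destruct (Rtotal_order a b) as [Hab | [<- | Hab]]; [| exists 1 | lra].
  - exists ((b - z) / (b - a)). split.
    + split; [apply Rdiv_le_0_compat | apply (Rdiv_le_1 (b - z) (b - a))]; lra.
    + field. lra.
  - split; lra.
Qed.

Definition in_box (p : pt) (r : R) (z : pt) : Prop :=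
  Rabs (fst z - fst p) <= r /\ Rabs (snd z - snd p) <= r.

Lemma in_box_reflect (p : pt) (r : R) (z : pt) :
  in_box p r z -> in_box p r (2 * fst p - fst z, 2 * snd p - snd z).
Proof.
  unfold in_box; cbn [fst snd]. intros [H1 H2].
  rewrite <- (Rabs_Ropp (fst z - fst p)), <- (Rabs_Ropp (snd z - snd p)) in *.
  split; [replace (2 * fst p - fst z - fst p) with (- (fst z - fst p)) by ring
         | replace (2 * snd p - snd z - snd p) with (- (snd z - snd p)) by ring]; assumption.
Qed.

Lemma convex2_box_upper_bound (g : pt -> R) (p : pt) (r : R) :
  convex2 g -> exists U, forall z, in_box p r z -> g z <= U.
Proof.
  intros Hg. set (a1 := fst p - r). set (b1 := fst p + r).
  set (a2 := snd p - r). set (b2 := snd p + r).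
  exists (Rmax (Rmax (g (a1, a2)) (g (a1, b2))) (Rmax (g (b1, a2)) (g (b1, b2)))).
  intros z [H1 H2]. apply Rabs_le_between in H1, H2.
  destruct (interval_comb a1 b1 (fst z)) as [t1 [Ht1 E1]]; [unfold a1, b1; lra |].
  destruct (interval_comb a2 b2 (snd z)) as [t2 [Ht2 E2]]; [unfold a2, b2; lra |].
  assert (Ez : z = comb t1 (a1, snd z) (b1, snd z)).
  { apply injective_projections; unfold comb; cbn [fst snd]; [exact E1 | ring]. }
  assert (Ea : (a1, snd z) = comb t2 (a1, a2) (a1, b2)).
  { apply injective_projections; unfold comb; cbn [fst snd]; [ring | exact E2]. }
  assert (Eb : (b1, snd z) = comb t2 (b1, a2) (b1, b2)).
  { apply injective_projections; unfold comb; cbn [fst snd]; [ring | exact E2]. }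
  rewrite Ez. eapply Rle_trans; [apply convex2_le_Rmax; assumption |].
  rewrite Ea, Eb. apply Rmax_lub.
  - eapply Rle_trans; [apply convex2_le_Rmax; assumption | apply Rmax_l].
  - eapply Rle_trans; [apply convex2_le_Rmax; assumption | apply Rmax_r].
Qed.

Lemma convex2_box_bounded (g : pt -> R) (p : pt) (r : R) :
  convex2 g -> exists L U, forall z, in_box p r z -> L <= g z <= U.
Proof.
  intros Hg. destruct (convex2_box_upper_bound g p r Hg) as [U HU].
  exists (2 * g p - U), U. intros z Hz. split; [| exact (HU z Hz)].
  set (z' := (2 * fst p - fst z, 2 * snd p - snd z)).
  assert (Ep : p = comb (/ 2) z z').
  { apply injective_projections; unfold comb, z'; cbn [fst snd]; field. }
  assert (Hmid := convex2_comb g z z' (/ 2) Hg ltac:(lra)).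
  rewrite <- Ep in Hmid. pose proof (HU z' (in_box_reflect p r z Hz)). lra.
Qed.

Lemma convex2_affine_minorant (G l : pt -> R) :
  convex2 G ->
  (forall x y t, l (comb t x y) = t * l x + (1 - t) * l y) ->
  (exists w, l w < 0) -> (exists u, 0 < l u) ->
  (forall z, l z = 0 -> 0 <= G z) ->
  exists b, forall w, b * l w <= G w.
Proof.
  intros HG Hl [w0 Hw0] [u0 Hu0] Hzero.
  assert (Hslopes : forall w u, l w < 0 -> 0 < l u -> G w / l w <= G u / l u).
  { intros w u Hw Hu. set (t := l u / (l u - l w)).
    assert (Ht : 0 <= t <= 1).
    { unfold t; split; [apply Rdiv_le_0_compat | apply (Rdiv_le_1 (l u) (l u - l w))]; lra. }
    (* [comb t w u] is where the segment [w, u] crosses [l = 0]. *)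
    assert (Hcross : l (comb t w u) = 0) by (rewrite Hl; unfold t; field; lra).
    pose proof (Hzero _ Hcross). pose proof (convex2_comb G w u t HG Ht).
    assert (Hnum : 0 <= l u * G w - l w * G u).
    { replace (l u * G w - l w * G u) with ((l u - l w) * (t * G w + (1 - t) * G u))
        by (unfold t; field; lra).
      apply Rmult_le_pos; lra. }
    assert (Ew : G w = G w / l w * l w) by (field; lra).
    assert (Eu : G u = G u / l u * l u) by (field; lra).
    set (sw := G w / l w) in *. set (su := G u / l u) in *.
    rewrite Ew, Eu in Hnum.
    assert (Hneg : l u * l w < 0) by nra.
    replace (l u * (sw * l w) - l w * (su * l u)) with ((l u * l w) * (sw - su)) in Hnum by ring.
    nra. }
  destruct (completeness (fun m => exists w, l w < 0 /\ m = G w / l w)) as [b [Hub Hlub]].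
  { exists (G u0 / l u0). intros m [w [Hw ->]]. auto. }
  { exists (G w0 / l w0). eauto. }
  exists b. intros w. destruct (Rtotal_order (l w) 0) as [Hw | [Hw | Hw]].
  - assert (Hle : G w / l w <= b) by (apply Hub; eauto).
    assert (Ew : G w = G w / l w * l w) by (field; lra). nra.
  - rewrite Hw, Rmult_0_r. auto.
  - assert (Hle : b <= G w / l w).
    { apply Hlub. intros m [w' [Hw' ->]]. auto. }
    assert (Ew : G w = G w / l w * l w) by (field; lra). nra.
Qed.

Definition is_subgradient (g : pt -> R) (q c : pt) : Prop :=
  forall y, g q + fst c * (fst y - fst q) + snd c * (snd y - snd q) <= g y.

Lemma convex2_subgradient (h : pt -> R) (q : pt) : convex2 h -> exists c, is_subgradient h q c.
Proof.
  intros Hh.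
  (* First a slope [a] along the horizontal line through [q], then a slope [b] across it. *)
  assert (Hq : (fst q, snd q) = q) by (symmetry; apply surjective_pairing).
  destruct (convex2_affine_minorant (fun w => h (fst w, snd q) - h q) (fun w => fst w - fst q))
    as [a Ha].
  { intros x y t Ht. cbn [fst].
    assert (E : (t * fst x + (1 - t) * fst y, snd q) = comb t (fst x, snd q) (fst y, snd q))
      by (apply injective_projections; unfold comb; cbn [fst snd]; ring).
    rewrite E. pose proof (convex2_comb h (fst x, snd q) (fst y, snd q) t Hh Ht). lra. }
  { intros x y t. unfold comb; cbn [fst snd]. ring. }
  { exists (fst q - 1, snd q). cbn [fst]. lra. }
  { exists (fst q + 1, snd q). cbn [fst]. lra. }
  { intros z Hz. replace (fst z) with (fst q) by lra. rewrite Hq. lra. }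
  destruct (convex2_affine_minorant (fun w => h w - h q - a * (fst w - fst q))
              (fun w => snd w - snd q)) as [b Hb].
  { intros x y t Ht. cbn beta. pose proof (convex2_comb h x y t Hh Ht).
    unfold comb in *; cbn [fst snd] in *. nra. }
  { intros x y t. unfold comb; cbn [fst snd]. ring. }
  { exists (fst q, snd q - 1). cbn [snd]. lra. }
  { exists (fst q, snd q + 1). cbn [snd]. lra. }
  { intros z Hz. specialize (Ha z). cbn beta in Ha.
    replace (snd q) with (snd z) in Ha by lra. rewrite <- surjective_pairing in Ha. lra. }
  exists (a, b). intros y. specialize (Hb y). cbn [fst snd]. lra.
Qed.

Lemma dist_set_le (M : pt -> Prop) (x a : pt) : M a -> dist_set M x <= edist x a.
Proof.
  intros Ha. unfold dist_set.
  destruct (Glb_Rbar_correct (fun r => exists a, M a /\ r = edist x a)) as [Hlb _].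
  specialize (Hlb (edist x a) (ex_intro _ a (conj Ha eq_refl))).
  destruct (Glb_Rbar _) as [v | |]; cbn in *; [exact Hlb | contradiction | apply edist_nonneg].
Qed.

Lemma dist_set_ge (M : pt -> Prop) (x : pt) (m : R) :
  (exists a, M a) -> (forall a, M a -> m <= edist x a) -> m <= dist_set M x.
Proof.
  intros [a0 Ha0] Hm. unfold dist_set.
  destruct (Glb_Rbar_correct (fun r => exists a, M a /\ r = edist x a)) as [Hlb Hglb].
  specialize (Hlb (edist x a0) (ex_intro _ a0 (conj Ha0 eq_refl))).
  assert (Hm' : Rbar_le m (Glb_Rbar (fun r => exists a, M a /\ r = edist x a))).
  { apply Hglb. intros r [a [Ha ->]]. exact (Hm a Ha). }
  destruct (Glb_Rbar _) as [v | |]; cbn in *; [exact Hm' | contradiction | contradiction].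
Qed.

Lemma dist_set_near_isolated (M : pt -> Prop) (q y : pt) (r : R) :
  M q -> (forall a, M a -> edist a q < r -> a = q) -> edist y q < r / 2 ->
  edist y q <= dist_set M y.
Proof.
  intros Mq Hiso Hy. apply dist_set_ge; [exists q; exact Mq |]. intros a Ma.
  destruct (classic (a = q)) as [-> | Hne]; [lra |].
  assert (Hfar : r <= edist a q).
  { apply Rnot_lt_le. intros Hlt. exact (Hne (Hiso a Ma Hlt)). }
  pose proof (edist_triangle a y q). rewrite (edist_sym a y) in *. lra.
Qed.

Definition is_cone_subgradient (g : pt -> R) (q c : pt) : Prop :=
  forall y, g q + fst c * (fst y - fst q) + snd c * (snd y - snd q) + edist y q <= g y.

Lemma cone_subgradient_subgradient (g : pt -> R) (q c : pt) :
  is_cone_subgradient g q c -> is_subgradient g q c.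
Proof. intros Hc y. specialize (Hc y). pose proof (edist_nonneg y q). lra. Qed.

Lemma convex2_cone_subgradient_of_local (g : pt -> R) (q c : pt) (rho : R) :
  convex2 g -> 0 < rho ->
  (forall y, edist y q < rho ->
     g q + fst c * (fst y - fst q) + snd c * (snd y - snd q) + edist y q <= g y) ->
  is_cone_subgradient g q c.
Proof.
  intros Hg Hrho Hloc y.
  destruct (Rlt_or_le (edist y q) rho) as [Hy | Hy]; [exact (Hloc y Hy) |].
  set (d := edist y q) in *. set (t := rho / (2 * d)).
  assert (Htd : t * d = rho / 2) by (unfold t; field; lra).
  assert (Ht : 0 < t <= 1).
  { split; [unfold t; apply Rdiv_lt_0_compat; lra | nra]. }
  assert (Hz := Hloc (comb t y q)).
  rewrite edist_comb in Hz by lra. fold d in Hz.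
  pose proof (convex2_comb g y q t Hg ltac:(lra)).
  unfold comb in *; cbn [fst snd] in *.
  assert (Hscaled : t * (g q + fst c * (fst y - fst q) + snd c * (snd y - snd q) + d) <= t * g y)
    by nra.
  apply Rmult_le_reg_l in Hscaled; lra.
Qed.

Lemma isolated_cone_subgradient (M : pt -> Prop) (g h : pt -> R) (q : pt) :
  convex2 g -> convex2 h -> (forall x, dist_set M x = g x - h x) ->
  isolated_points M q -> exists c, is_cone_subgradient g q c.
Proof.
  intros Hg Hh Hdc [Mq [r [Hr Hiso]]].
  destruct (convex2_subgradient h q Hh) as [c Hc]. exists c.
  apply (convex2_cone_subgradient_of_local g q c (r / 2) Hg); [lra |]. intros y Hy.
  pose proof (dist_set_le M q q Mq) as Hq. rewrite edist_refl in Hq.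
  pose proof (dist_set_near_isolated M q y r Mq Hiso Hy) as Hnear.
  rewrite Hdc in Hq, Hnear. specialize (Hc y). lra.
Qed.

Lemma cone_subgradients_monotone (g : pt -> R) (q q' c c' : pt) :
  is_cone_subgradient g q c -> is_cone_subgradient g q' c' ->
  2 * edist q' q <= (fst c' - fst c) * (fst q' - fst q) + (snd c' - snd c) * (snd q' - snd q).
Proof.
  intros Hc Hc'. specialize (Hc q'). specialize (Hc' q).
  rewrite (edist_sym q q') in Hc'. nra.
Qed.

Definition cell (c : pt) : Z * Z := (up (fst c), up (snd c)).

Lemma up_eq_close (a b : R) : up a = up b -> Rabs (a - b) < 1.
Proof.
  intros E. destruct (archimed a) as [Ha1 Ha2]. destruct (archimed b) as [Hb1 Hb2].
  rewrite E in Ha1, Ha2. apply Rabs_def1; lra.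
Qed.

Lemma Rmult_le_Rabs_bound (a x d : R) : Rabs x <= d -> a * x <= Rabs a * d.
Proof.
  intros Hx. eapply Rle_trans; [apply Rle_abs |]. rewrite Rabs_mult.
  apply Rmult_le_compat_l; [apply Rabs_pos | exact Hx].
Qed.

Lemma cone_subgradient_cell_inj (g : pt -> R) (q q' c c' : pt) :
  is_cone_subgradient g q c -> is_cone_subgradient g q' c' -> cell c = cell c' -> q = q'.
Proof.
  intros Hc Hc' Hcell. apply NNPP. intros Hne.
  injection Hcell as E1 E2. apply up_eq_close in E1, E2.
  pose proof (cone_subgradients_monotone g q q' c c' Hc Hc') as Hmono.
  pose proof (edist_pos q' q (not_eq_sym Hne)) as Hd.
  pose proof (edist_fst q' q) as Hx. pose proof (edist_snd q' q) as Hy.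
  rewrite Rabs_minus_sym in E1, E2.
  set (A := fst c' - fst c) in *. set (B := snd c' - snd c) in *.
  set (X := fst q' - fst q) in *. set (Y := snd q' - snd q) in *.
  pose proof (Rmult_le_Rabs_bound A X _ Hx). pose proof (Rmult_le_Rabs_bound B Y _ Hy).
  nra.
Qed.

Lemma subgradient_bounded (g : pt -> R) (q c : pt) (L U : R) :
  is_subgradient g q c -> (forall y, in_box q 1 y -> L <= g y <= U) ->
  Rabs (fst c) <= U - L /\ Rabs (snd c) <= U - L.
Proof.
  intros Hc Hbox. destruct q as [q1 q2].
  assert (Hstep : forall s1 s2, Rabs s1 <= 1 -> Rabs s2 <= 1 ->
    fst c * s1 + snd c * s2 <= U - L).
  { intros s1 s2 H1 H2. specialize (Hc (q1 + s1, q2 + s2)).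
    destruct (Hbox (q1, q2)) as [Hq _].
    { unfold in_box; cbn [fst snd]. rewrite !Rminus_diag, Rabs_R0. lra. }
    destruct (Hbox (q1 + s1, q2 + s2)) as [_ Hy].
    { unfold in_box; cbn [fst snd]. now replace (q1 + s1 - q1) with s1 by ring;
        replace (q2 + s2 - q2) with s2 by ring. }
    cbn [fst snd] in Hc. replace (q1 + s1 - q1) with s1 in Hc by ring.
    replace (q2 + s2 - q2) with s2 in Hc by ring. lra. }
  assert (H1 : Rabs 1 <= 1) by (apply Rabs_le; lra).
  assert (Hm1 : Rabs (-1) <= 1) by (apply Rabs_le; lra).
  assert (H0 : Rabs 0 <= 1) by (apply Rabs_le; lra).
  pose proof (Hstep 1 0 H1 H0). pose proof (Hstep (-1) 0 Hm1 H0).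
  pose proof (Hstep 0 1 H0 H1). pose proof (Hstep 0 (-1) H0 Hm1).
  split; apply Rabs_le; lra.
Qed.

Lemma up_bounded (x B : R) : Rabs x <= B -> (- up B <= up x <= up B)%Z.
Proof.
  intros Hx. apply Rabs_le_between in Hx.
  destruct (archimed x) as [Hx1 Hx2]. destruct (archimed B) as [HB1 HB2].
  split.
  - apply le_IZR. rewrite opp_IZR. lra.
  - assert (Hlt : IZR (up x) < IZR (up B + 1)) by (rewrite plus_IZR; lra).
    apply lt_IZR in Hlt. lia.
Qed.

Definition zrange (K : Z) : list Z :=
  map (fun n => (Z.of_nat n - K)%Z) (seq 0 (Z.to_nat (2 * K + 1))).

Lemma in_zrange (K z : Z) : (- K <= z <= K)%Z -> In z (zrange K).
Proof.
  intros Hz. apply in_map_iff. exists (Z.to_nat (z + K)). split; [lia |]. apply in_seq. lia.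
Qed.

Lemma not_accumulation_of_finite_labelling {T : Type} (D : pt -> Prop) (lab : pt -> T -> Prop)
    (p : pt) (labels : list T) (r : R) :
  0 < r ->
  (forall q q' k, D q -> D q' -> lab q k -> lab q' k -> q = q') ->
  (forall q, D q -> q <> p -> edist q p < r -> exists k, In k labels /\ lab q k) ->
  exists eps, 0 < eps /\ forall q, D q -> edist q p < eps -> q = p.
Proof.
  intros Hr Hinj. revert r Hr.
  induction labels as [| k labels IH]; intros r Hr Hlab.
  - exists r. split; [exact Hr |]. intros q Dq Hq. apply NNPP. intros Hne.
    destruct (Hlab q Dq Hne Hq) as [k [[] _]].
  - destruct (classic (exists q, D q /\ q <> p /\ edist q p < r /\ lab q k))
      as [[q [Dq [Hne [Hq Hk]]]] | Hnone].
    + (* Below the distance of the unique point labelled [k], that label is unused. *)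
      apply (IH (edist q p) (edist_pos q p Hne)). intros q' Dq' Hne' Hq'.
      destruct (Hlab q' Dq' Hne' (Rlt_trans _ _ _ Hq' Hq)) as [k' [[<- | Hin] Hk']].
      * rewrite (Hinj q' q k Dq' Dq Hk' Hk) in Hq'. lra.
      * eauto.
    + apply (IH r Hr). intros q' Dq' Hne' Hq'.
      destruct (Hlab q' Dq' Hne' Hq') as [k' [[<- | Hin] Hk']]; [| eauto].
      exfalso. apply Hnone. eauto.
Qed.

Lemma in_box_of_near (p q y : pt) : edist q p < 1 -> in_box q 1 y -> in_box p 2 y.
Proof.
  intros Hq [H1 H2]. pose proof (edist_fst q p). pose proof (edist_snd q p).
  split.
  - replace (fst y - fst p) with ((fst y - fst q) + (fst q - fst p)) by ring.
    eapply Rle_trans; [apply Rabs_triang | lra].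
  - replace (snd y - snd p) with ((snd y - snd q) + (snd q - snd p)) by ring.
    eapply Rle_trans; [apply Rabs_triang | lra].
Qed.

Theorem corollary4p13 (M : pt -> Prop) :
  D2 M -> discrete2 (isolated_points M).
Proof.
  intros [Hempty | [_ [_ [g [h [Hg [Hh Hdc]]]]]]] p.
  - exists 1. split; [lra |]. intros y z [My _]. destruct (Hempty y My).
  - destruct (convex2_box_bounded g p 2 Hg) as [L [U HLU]].
    set (K := up (U - L)).
    destruct (not_accumulation_of_finite_labelling (isolated_points M)
                (fun q k => exists c, is_cone_subgradient g q c /\ cell c = k)
                p (list_prod (zrange K) (zrange K)) 1) as [eps [Heps Hp]].
    + lra.
    + intros q q' k _ _ [c [Hc <-]] [c' [Hc' Hcell]].
      exact (cone_subgradient_cell_inj g q q' c c' Hc Hc' (eq_sym Hcell)).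
    + intros q Iq _ Hq.
      destruct (isolated_cone_subgradient M g h q Hg Hh Hdc Iq) as [c Hc].
      exists (cell c). split; [| eauto].
      destruct (subgradient_bounded g q c L U (cone_subgradient_subgradient g q c Hc))
        as [Hc1 Hc2].
      { intros y Hy. exact (HLU y (in_box_of_near p q y Hq Hy)). }
      apply in_prod; apply in_zrange, up_bounded; assumption.
    + exists eps. split; [exact Heps |]. intros y z Iy Iz Hy Hz.
      now rewrite (Hp y Iy Hy), (Hp z Iz Hz).
Qed.
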